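(* In system $\mathscr{E}$: if $\Phi'\triangleright\Gamma\vdash^{(b',e',m',f')}t':\sigma$ and $t\to_h t'$ by a step of kind $\mathcal{R}\in\{b,e,m\}$, then there is a derivation $\Phi\triangleright\Gamma\vdash^{(b,e,m,f)}t:\sigma$ where: if $\mathcal{R}=b$ then $b=b'+1$, $e'=e$, $m'=m$; if $\mathcal{R}=e$ then $b'=b$, $e=e'+1$, $m'=m$; if $\mathcal{R}=m$ then $b'=b$, $e'=e$, $m=m'+1$.
   Context: Pair pattern calculus: patterns $p,q ::= x\mid\langle p,q\rangle$ (linear); $\mathrm{var}(p)$ = variables of $p$; $p\# q$ means disjoint variables. Terms $t,u ::= x\mid\lambda p.t\mid\langle t,u\rangle\mid t\,u\mid t[p/u]$, $\mathrm{var}(p)$ bound in $t$ in $\lambda p.t$ and $t[p/u]$; $\mathrm{fv}$ as usual; terms modulo $\alpha$. List contexts $L::=\Box\mid L[p/u]$, $L\langle t\rangle$ plugging (possibly capturing), $\mathrm{bv}(L)$ variables bound by $L$; $t\{x/u\}$ capture-avoiding substitution; $\mathrm{abs}(t)$ iff $t=L\langle\lambda p.u\rangle$. Head reduction ($t\not\to_h$: no $u$ with $t\to_h u$): (b) $L\langle\lambda p.t\rangle u\to_h L\langle t[p/u]\rangle$ if $\mathrm{bv}(L)\cap\mathrm{fv}(u)=\emptyset$; (m) $t[\langle p_1,p_2\rangle/L\langle\langle u_1,u_2\rangle\rangle]\to_h L\langle t[p_1/u_1][p_2/u_2]\rangle$ if $t\not\to_h$ and $\mathrm{bv}(L)\cap\mathrm{fv}(t)=\emptyset$;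 (e) $t[x/u]\to_h t\{x/u\}$ if $t\not\to_h$; closure: $\lambda p.t\to_h\lambda p.t'$ if $t\to_h t'$; $tu\to_h t'u$ if $t\to_h t'$ and not $\mathrm{abs}(t)$; $t[p/u]\to_h t'[p/u]$ if $t\to_h t'$; $t[p/u]\to_h t[p/u']$ if $t\not\to_h$, $p$ not a variable, $u\to_h u'$. The kind of a step is the base rule (b), (e) or (m) it uses. System $\mathscr{E}$. Types: tight types $\mathtt{t} ::= \bullet_{\mathcal{N}}\mid\bullet_{\mathcal{M}}$; types $\sigma ::= \mathtt{t}\mid \mathcal{A}_1\times\mathcal{A}_2\mid \mathcal{A}\to\sigma$; multi-types $\mathcal{A} ::= [\sigma_k]_{k\in K}$ (finite, possibly empty). Contexts map variables to multi-types, $\mathrm{dom}(\Gamma)$ = variables with non-empty multi-type; $\wedge$ pointwise multiset union; $\Gamma|_p$ restriction to $\mathrm{var}(p)$; $\Gamma\setminus\mathrm{var}(p)$ removal. $\mathrm{tight}(\sigma)$ iff $\sigma\in\{\bullet_{\mathcal{N}},\bullet_{\mathcal{M}}\}$, extended elementwise. Rules: (pat_v) $x:\mathcal{A}\Vdash^{(1,0,0)} x:\mathcal{A}$. (pat_×) from $\Gamma\Vdash^{(e_p,m_p,f_p)}p:\mathcal{A}$, $\Delta\Vdash^{(e_q,m_q,f_q)}q:\mathcal{B}$, $p\#q$ infer $\Gamma\wedge\Delta\Vdash^{(e_p+e_q,1+m_p+m_q,f_p+f_q)}\langle p,q\rangle:[\mathcal{A}\times\mathcal{B}]$. (pat_p)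 if $\mathrm{dom}(\Gamma)\subseteq\mathrm{var}(\langle p,q\rangle)$ and $\mathrm{tight}(\Gamma)$ then $\Gamma\Vdash^{(0,0,1)}\langle p,q\rangle:[\bullet_{\mathcal{N}}]$. (ax) $x:[\sigma]\vdash^{(0,0,0,0)}x:\sigma$. (abs) from $\Gamma\vdash^{(b,e,m,f)}t:\sigma$ and $\Gamma|_p\Vdash^{(e_p,m_p,f_p)}p:\mathcal{A}$ infer $\Gamma\setminus\mathrm{var}(p)\vdash^{(b+1,e+e_p,m+m_p,f+f_p)}\lambda p.t:\mathcal{A}\to\sigma$. (abs_p) from $\Gamma\vdash^{(b,e,m,f)}t:\mathtt{t}$ ($\mathtt{t}$ tight) and $\mathrm{tight}(\Gamma|_p)$ infer $\Gamma\setminus\mathrm{var}(p)\vdash^{(b,e,m,f+1)}\lambda p.t:\bullet_{\mathcal{M}}$. (many) from $(\Gamma_k\vdash^{(b_k,e_k,m_k,f_k)}t:\sigma_k)_{k\in K}$ infer $\wedge_k\Gamma_k\vdash^{(\sum b_k,\sum e_k,\sum m_k,\sum f_k)}t:[\sigma_k]_{k\in K}$. (app) from $\Gamma\vdash^{(b_t,e_t,m_t,f_t)}t:\mathcal{A}\to\sigma$, $\Delta\vdash^{(b_u,e_u,m_u,f_u)}u:\mathcal{A}$ infer $\Gamma\wedge\Delta\vdash^{(b_t+b_u,e_t+e_u,m_t+m_u,f_t+f_u)}t\,u:\sigma$. (app_p) from $\Gamma\vdash^{(b,e,m,f)}t:\bullet_{\mathcal{N}}$ infer $\Gamma\vdash^{(b,e,m,f+1)}t\,u:\bullet_{\mathcal{N}}$.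 (pair) from $\Gamma\vdash^{(b_t,e_t,m_t,f_t)}t:\mathcal{A}$, $\Delta\vdash^{(b_u,e_u,m_u,f_u)}u:\mathcal{B}$ infer $\Gamma\wedge\Delta\vdash^{(b_t+b_u,e_t+e_u,m_t+m_u,f_t+f_u)}\langle t,u\rangle:\mathcal{A}\times\mathcal{B}$. (pair_p) $\vdash^{(0,0,0,1)}\langle t,u\rangle:\bullet_{\mathcal{M}}$. (match) from $\Gamma\vdash^{(b_t,e_t,m_t,f_t)}t:\sigma$, $\Gamma|_p\Vdash^{(e_p,m_p,f_p)}p:\mathcal{A}$, $\Delta\vdash^{(b_u,e_u,m_u,f_u)}u:\mathcal{A}$ infer $(\Gamma\setminus\mathrm{var}(p))\wedge\Delta\vdash^{(b_t+b_u,e_t+e_u+e_p,m_t+m_u+m_p,f_t+f_u+f_p)}t[p/u]:\sigma$. *)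

From Stdlib Require Import List Arith.
Import ListNotations.

(* Patterns: the leaves of a pattern are its (anonymous, hence automatically
   linear) variables.  A pattern with n leaves binds n de Bruijn indices:
   the leaves, read left to right, are bound to indices 0, 1, ..., n-1. *)
Inductive pat : Type :=
| PVar : pat
| PPair : pat -> pat -> pat.

Fixpoint np (p : pat) : nat :=
  match p with
  | PVar => 1
  | PPair p q => np p + np q
  end.

(* Terms modulo alpha, as de Bruijn terms.  Sub t p u is t[p/u]. *)
Inductive term : Type :=
| Var : nat -> term
| Lam : pat -> term -> term
| Pair : term -> term -> term
| App : term -> term -> term
| Sub : term -> pat -> term -> term.

Fixpoint shift (d c : nat) (t : term) : term :=
  match t with
  | Var n => if c <=? n then Var (n + d) else Var n
  | Lam p t1 => Lam p (shift d (c + np p) t1)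
  | Pair t1 t2 => Pair (shift d c t1) (shift d c t2)
  | App t1 t2 => App (shift d c t1) (shift d c t2)
  | Sub t1 p t2 => Sub (shift d (c + np p) t1) p (shift d c t2)
  end.

Fixpoint subst (k : nat) (u : term) (t : term) : term :=
  match t with
  | Var n => if n <? k then Var n else if n =? k then shift k 0 u else Var (n - 1)
  | Lam p t1 => Lam p (subst (k + np p) u t1)
  | Pair t1 t2 => Pair (subst k u t1) (subst k u t2)
  | App t1 t2 => App (subst k u t1) (subst k u t2)
  | Sub t1 p t2 => Sub (subst (k + np p) u t1) p (subst k u t2)
  end.

(* t{x/u} where x is the variable bound by t[x/u] (index 0 of t) *)
Definition subst0 (t u : term) : term := subst 0 u t.

(* List contexts L ::= [] | L[p/u]; the head of the list is the outermost
   explicit substitution:  plug ((p,u) :: L) t = (plug L t)[p/u]. *)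
Definition lctx := list (pat * term).

Fixpoint plug (L : lctx) (t : term) : term :=
  match L with
  | [] => t
  | (p, u) :: L' => Sub (plug L' t) p u
  end.

Fixpoint nbv (L : lctx) : nat :=
  match L with
  | [] => 0
  | (p, _) :: L' => np p + nbv L'
  end.

Definition is_abs (t : term) : Prop :=
  exists (L : lctx) (p : pat) (u : term), t = plug L (Lam p u).

Inductive kind : Type := KB | KE | KM.

(* Every premise of every rule refers to ->_h only on immediate subterms of
   the left-hand side, so the relation (including its negative premises
   "t is head normal") is defined by structural recursion on s.
   The freshness side conditions of the named presentation are replaced by
   the corresponding de Bruijn shifts. *)
Fixpoint hred (s : term) (k : kind) (s' : term) {struct s} : Prop :=
  match s with
  | Var _ => False
  | Pair _ _ => False
  | Lam p t =>
      exists t', s' = Lam p t' /\ hred t k t'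
  | App t u =>
      (k = KB /\ exists (L : lctx) (p : pat) (r : term),
          t = plug L (Lam p r) /\ s' = plug L (Sub r p (shift (nbv L) 0 u)))
      \/
      (exists t', s' = App t' u /\ hred t k t' /\ ~ is_abs t)
  | Sub t p u =>
      (k = KM /\ ~ (exists k0 t0, hred t k0 t0) /\
        exists (p1 p2 : pat) (L : lctx) (u1 u2 : term),
          p = PPair p1 p2 /\ u = plug L (Pair u1 u2) /\
          s' = plug L (Sub (Sub (shift (nbv L) (np p1 + np p2) t) p1
                                (shift (np p2) 0 u1)) p2 u2))
      \/
      (k = KE /\ ~ (exists k0 t0, hred t k0 t0) /\ p = PVar /\ s' = subst0 t u)
      \/
      (exists t', s' = Sub t' p u /\ hred t k t')
      \/
      (~ (exists k0 t0, hred t k0 t0) /\ p <> PVar /\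
        exists u', s' = Sub t p u' /\ hred u k u')
  end.

(* TN = bullet_N, TM = bullet_M; multi-types are lists considered up to
   permutation (see teq / mteq below). *)
Inductive ty : Type :=
| TN : ty
| TM : ty
| TProd : list ty -> list ty -> ty
| TArr : list ty -> ty -> ty.

Definition mty := list ty.

Inductive teq : ty -> ty -> Prop :=
| teq_N : teq TN TN
| teq_M : teq TM TM
| teq_prod A1 A2 B1 B2 : mteq A1 A2 -> mteq B1 B2 -> teq (TProd A1 B1) (TProd A2 B2)
| teq_arr A1 A2 s1 s2 : mteq A1 A2 -> teq s1 s2 -> teq (TArr A1 s1) (TArr A2 s2)
with mteq : mty -> mty -> Prop :=
| mteq_nil : mteq [] []
| mteq_cons s1 s2 A1 A2 : teq s1 s2 -> mteq A1 A2 -> mteq (s1 :: A1) (s2 :: A2)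
| mteq_swap s1 s2 A : mteq (s1 :: s2 :: A) (s2 :: s1 :: A)
| mteq_trans A1 A2 A3 : mteq A1 A2 -> mteq A2 A3 -> mteq A1 A3.

Definition tight (s : ty) : Prop := s = TN \/ s = TM.
Definition tight_mt (A : mty) : Prop := Forall tight A.

(* Typing contexts: de Bruijn index -> multi-type (empty list = not in dom). *)
Definition ctx := nat -> mty.
Definition ctx_empty : ctx := fun _ => [].
Definition ctx_eq (G D : ctx) : Prop := forall i, mteq (G i) (D i).
Definition ctx_and (G D : ctx) : ctx := fun i => G i ++ D i.
Definition ctx_one (x : nat) (A : mty) : ctx := fun i => if i =? x then A else [].
Definition ctx_restr (G : ctx) (n : nat) : ctx := fun i => if i <? n then G i else [].
Definition ctx_rem (G : ctx) (n : nat) : ctx := fun i => G (i + n).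
(* Gamma /\ Delta for the pattern <p,q> : Gamma on var(p) (indices < n),
   Delta on var(q) (indices >= n, locally numbered from 0) *)
Definition ctx_pjoin (n : nat) (G D : ctx) : ctx :=
  fun i => if i <? n then G i else D (i - n).
Definition ctx_tight (G : ctx) : Prop := forall i, tight_mt (G i).

Inductive ptyp : ctx -> pat -> mty -> nat -> nat -> nat -> Prop :=
| pat_v A : ptyp (ctx_one 0 A) PVar A 1 0 0
| pat_x G D p q A B ep mp fp eq mq fq :
    ptyp G p A ep mp fp -> ptyp D q B eq mq fq ->
    ptyp (ctx_pjoin (np p) G D) (PPair p q) [TProd A B]
         (ep + eq) (1 + mp + mq) (fp + fq)
| pat_p G p q :
    (forall i, np (PPair p q) <= i -> G i = []) -> ctx_tight G ->
    ptyp G (PPair p q) [TN] 0 0 1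
| pat_eq G G' p A A' e m f :
    ptyp G p A e m f -> ctx_eq G G' -> mteq A A' -> ptyp G' p A' e m f.

Inductive typ : ctx -> term -> ty -> nat -> nat -> nat -> nat -> Prop :=
| ty_ax x s : typ (ctx_one x [s]) (Var x) s 0 0 0 0
| ty_abs G p t s A b e m f ep mp fp :
    typ G t s b e m f -> ptyp (ctx_restr G (np p)) p A ep mp fp ->
    typ (ctx_rem G (np p)) (Lam p t) (TArr A s) (b + 1) (e + ep) (m + mp) (f + fp)
| ty_abs_p G p t s b e m f :
    typ G t s b e m f -> tight s -> (forall i, i < np p -> tight_mt (G i)) ->
    typ (ctx_rem G (np p)) (Lam p t) TM b e m (f + 1)
| ty_app G D t u A s bt et mt ft bu eu mu fu :
    typ G t (TArr A s) bt et mt ft -> mtyp D u A bu eu mu fu ->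
    typ (ctx_and G D) (App t u) s (bt + bu) (et + eu) (mt + mu) (ft + fu)
| ty_app_p G t u b e m f :
    typ G t TN b e m f -> typ G (App t u) TN b e m (f + 1)
| ty_pair G D t u A B bt et mt ft bu eu mu fu :
    mtyp G t A bt et mt ft -> mtyp D u B bu eu mu fu ->
    typ (ctx_and G D) (Pair t u) (TProd A B) (bt + bu) (et + eu) (mt + mu) (ft + fu)
| ty_pair_p t u : typ ctx_empty (Pair t u) TM 0 0 0 1
| ty_match G D t p u s A bt et mt ft ep mp fp bu eu mu fu :
    typ G t s bt et mt ft -> ptyp (ctx_restr G (np p)) p A ep mp fp ->
    mtyp D u A bu eu mu fu ->
    typ (ctx_and (ctx_rem G (np p)) D) (Sub t p u) s
        (bt + bu) (et + eu + ep) (mt + mu + mp) (ft + fu + fp)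
| ty_eq G G' t s s' b e m f :
    typ G t s b e m f -> ctx_eq G G' -> teq s s' -> typ G' t s' b e m f
with mtyp : ctx -> term -> mty -> nat -> nat -> nat -> nat -> Prop :=
| many_nil t : mtyp ctx_empty t [] 0 0 0 0
| many_cons G D t s A b1 e1 m1 f1 b2 e2 m2 f2 :
    typ G t s b1 e1 m1 f1 -> mtyp D t A b2 e2 m2 f2 ->
    mtyp (ctx_and G D) t (s :: A) (b1 + b2) (e1 + e2) (m1 + m2) (f1 + f2)
| many_eq G G' t A A' b e m f :
    mtyp G t A b e m f -> ctx_eq G G' -> mteq A A' -> mtyp G' t A' b e m f.

(* Contextual steps are immediate: each closure rule of head reduction has a
   typing rule whose counters simply add up.  For a root step the derivation
   of the reduct is taken apart and reassembled around the redex.  A (b) step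
   turns the typing of r[p/u] back into an abstraction applied to u, and (abs)
   adds the extra 1 to b.  An (m) step merges the two nested matches into one
   match on the pair pattern, and (pat_x) adds the extra 1 to m.  An (e) step
   needs anti-substitution: a typing of t{x/u} splits into a typing of t and a
   multi-typing of u at the multi-type of x, and (pat_v) adds the extra 1 to e.
   As terms are de Bruijn, substitutions and list contexts shift indices, and
   an anti-weakening lemma undoes these shifts. *)

From Stdlib Require Import List Arith Lia Permutation Setoid Morphisms.
Import ListNotations.

(** * Multi-types up to permutation *)

Fixpoint teq_refl (s : ty) : teq s s :=
  let fix mteq_refl_list (A : mty) : mteq A A :=
    match A with
    | [] => mteq_nil
    | s0 :: A0 => mteq_cons _ _ _ _ (teq_refl s0) (mteq_refl_list A0)
    end in
  match s with
  | TN => teq_N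
  | TM => teq_M
  | TProd A B => teq_prod _ _ _ _ (mteq_refl_list A) (mteq_refl_list B)
  | TArr A s0 => teq_arr _ _ _ _ (mteq_refl_list A) (teq_refl s0)
  end.

Lemma mteq_refl (A : mty) : mteq A A.
Proof. induction A; constructor; auto using teq_refl. Qed.

Scheme teq_mut := Induction for teq Sort Prop
  with mteq_mut := Induction for mteq Sort Prop.
Combined Scheme teq_mteq_mut from teq_mut, mteq_mut.

Lemma teq_mteq_sym :
  (forall s s', teq s s' -> teq s' s) /\ (forall A A', mteq A A' -> mteq A' A).
Proof. apply teq_mteq_mut; intros; try solve [constructor; auto]; eapply mteq_trans; eauto. Qed.

Lemma teq_trans (s1 s2 s3 : ty) : teq s1 s2 -> teq s2 s3 -> teq s1 s3.
Proof.
  intros H; revert s3; induction H; intros s3 H'; inversion H'; subst;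
    constructor; eauto using mteq_trans.
Qed.

#[global] Instance teq_Equivalence : Equivalence teq.
Proof. split; [exact teq_refl | exact (proj1 teq_mteq_sym) | exact teq_trans]. Qed.

#[global] Instance mteq_Equivalence : Equivalence mteq.
Proof. split; [exact mteq_refl | exact (proj2 teq_mteq_sym) | exact mteq_trans]. Qed.

Lemma Permutation_mteq (A A' : mty) : Permutation A A' -> mteq A A'.
Proof.
  induction 1.
  - apply mteq_nil.
  - apply mteq_cons; auto using teq_refl.
  - apply mteq_swap.
  - eapply mteq_trans; eauto.
Qed.

Lemma mteq_app_l (A A' B : mty) : mteq A A' -> mteq (A ++ B) (A' ++ B).
Proof.
  induction 1; simpl.
  - apply mteq_refl.
  - apply mteq_cons; auto.
  - apply mteq_swap.
  - eapply mteq_trans; eauto.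
Qed.

Lemma mteq_app_r (A B B' : mty) : mteq B B' -> mteq (A ++ B) (A ++ B').
Proof. induction A; simpl; auto using mteq_cons, teq_refl. Qed.

#[global] Instance app_mteq_Proper : Proper (mteq ==> mteq ==> mteq) (@app ty).
Proof. intros A A' HA B B' HB; etransitivity; [apply mteq_app_l | apply mteq_app_r]; eauto. Qed.

Lemma mteq_length (A A' : mty) : mteq A A' -> length A = length A'.
Proof. induction 1; simpl; congruence. Qed.

Lemma tight_teq (s s' : ty) : teq s s' -> tight s -> tight s'.
Proof. intros H [-> | ->]; inversion H; red; auto. Qed.

Lemma tight_mteq (A A' : mty) : mteq A A' -> tight_mt A -> tight_mt A'.
Proof.
  unfold tight_mt; induction 1; intros HA; auto.
  - inversion HA; constructor; eauto using tight_teq.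
  - inversion HA as [|? ? H1 HA']; inversion HA'; repeat apply Forall_cons; auto.
Qed.

(** * Contexts *)

Definition ctx_shift (d c : nat) (G : ctx) : ctx :=
  fun i => if i <? c then G i else if i <? c + d then [] else G (i - d).

Definition ctx_del (k : nat) (G : ctx) : ctx :=
  fun i => if i <? k then G i else G (S i).

#[global] Instance ctx_eq_Equivalence : Equivalence ctx_eq.
Proof.
  unfold ctx_eq; split; red; intros.
  - reflexivity.
  - symmetry; auto.
  - etransitivity; eauto.
Qed.

#[global] Instance ctx_and_Proper : Proper (ctx_eq ==> ctx_eq ==> ctx_eq) ctx_and.
Proof. intros G G' HG D D' HD i; apply app_mteq_Proper; auto. Qed.

#[global] Instance ctx_rem_Proper : Proper (ctx_eq ==> eq ==> ctx_eq) ctx_rem.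
Proof. intros G G' HG n n' <- i; apply HG. Qed.

#[global] Instance ctx_restr_Proper : Proper (ctx_eq ==> eq ==> ctx_eq) ctx_restr.
Proof.
  intros G G' HG n n' <- i; unfold ctx_restr; destruct (i <? n); [apply HG | reflexivity].
Qed.

#[global] Instance ctx_pjoin_Proper : Proper (eq ==> ctx_eq ==> ctx_eq ==> ctx_eq) ctx_pjoin.
Proof. intros n n' <- G G' HG D D' HD i; unfold ctx_pjoin; destruct (i <? n); auto. Qed.

(* Proves [Permutation] between concatenations by cancelling equal heads and
   rotating the right-hand side; [n] bounds the number of rotations. *)
Ltac perm_solve n :=
  match n with
  | O => fail
  | S ?n' =>
    repeat rewrite <- app_assoc; rewrite ?app_nil_l, ?app_nil_r;
    first [ reflexivity
          | match goal with
            | |- Permutation (?a ++ _) (?a ++ _) => apply Permutation_app_head; perm_solve n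
            end
          | eapply Permutation_trans; [| apply Permutation_app_comm]; perm_solve n' ]
  end.

Ltac index_cases :=
  repeat match goal with
  | |- context [?a <? ?b] => destruct (Nat.ltb_spec a b)
  | |- context [?a =? ?b] => destruct (Nat.eqb_spec a b)
  end.

Ltac index_unify :=
  repeat match goal with
  | |- context [?F ?a] =>
      is_var F;
      match goal with
      | |- context [F ?b] =>
          tryif constr_eq a b then fail
          else (let E := fresh in assert (E : F b = F a) by (f_equal; lia); rewrite E; clear E)
      end
  end.

Ltac ctx_solve :=
  let i := fresh "i" in
  intro i;
  unfold ctx_and, ctx_rem, ctx_restr, ctx_one, ctx_shift, ctx_del, ctx_pjoin, ctx_empty;
  index_cases; try (exfalso; lia); index_unify; apply Permutation_mteq; perm_solve 8.

Lemma tight_below_restr (n : nat) (G G' : ctx) :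
  ctx_eq (ctx_restr G n) (ctx_restr G' n) ->
  (forall i, i < n -> tight_mt (G i)) -> forall i, i < n -> tight_mt (G' i).
Proof.
  intros E HG i Hi; specialize (E i); unfold ctx_restr in E.
  rewrite (proj2 (Nat.ltb_lt _ _) Hi) in E; exact (tight_mteq _ _ E (HG i Hi)).
Qed.

#[global] Instance typ_Proper :
  Proper (ctx_eq ==> eq ==> teq ==> eq ==> eq ==> eq ==> eq ==> iff) typ.
Proof. repeat intro; subst; split; intro; eapply ty_eq; eauto; symmetry; auto. Qed.

#[global] Instance mtyp_Proper :
  Proper (ctx_eq ==> eq ==> mteq ==> eq ==> eq ==> eq ==> eq ==> iff) mtyp.
Proof. repeat intro; subst; split; intro; eapply many_eq; eauto; symmetry; auto. Qed.

#[global] Instance ptyp_Proper :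
  Proper (ctx_eq ==> eq ==> mteq ==> eq ==> eq ==> eq ==> iff) ptyp.
Proof. repeat intro; subst; split; intro; eapply pat_eq; eauto; symmetry; auto. Qed.

Lemma mtyp_singleton (G : ctx) (t : term) (s : ty) (b e m f : nat) :
  typ G t s b e m f -> mtyp G t [s] b e m f.
Proof.
  intros H. rewrite <- (Nat.add_0_r b), <- (Nat.add_0_r e), <- (Nat.add_0_r m), <- (Nat.add_0_r f).
  assert (E : ctx_eq G (ctx_and G ctx_empty)) by ctx_solve.
  rewrite E; econstructor; [exact H | constructor].
Qed.

Lemma mtyp_app (G D : ctx) (t : term) (A B : mty) (b1 e1 m1 f1 b2 e2 m2 f2 : nat) :
  mtyp G t A b1 e1 m1 f1 -> mtyp D t B b2 e2 m2 f2 ->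
  mtyp (ctx_and G D) t (A ++ B) (b1 + b2) (e1 + e2) (m1 + m2) (f1 + f2).
Proof.
  intros HA; revert D B b2 e2 m2 f2; induction HA; intros D' B b2' e2' m2' f2' HB; simpl.
  - assert (E : ctx_eq (ctx_and ctx_empty D') D') by ctx_solve. rewrite E; exact HB.
  - assert (E : ctx_eq (ctx_and (ctx_and G D) D') (ctx_and G (ctx_and D D'))) by ctx_solve.
    rewrite E, <- !Nat.add_assoc. econstructor; eauto.
  - rewrite <- H, <- H0; auto.
Qed.

Scheme typ_mut := Induction for typ Sort Prop
  with mtyp_mut := Induction for mtyp Sort Prop.
Combined Scheme typ_mtyp_mut from typ_mut, mtyp_mut.

(** * Anti-weakening *)

Lemma ctx_restr_shift_above (d c n : nat) (G : ctx) :
  ctx_eq (ctx_restr (ctx_shift d (c + n) G) n) (ctx_restr G n).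
Proof. ctx_solve. Qed.

Ltac invert_shift E :=
  let v := match type of E with shift _ _ ?v = _ => v end in
  destruct v; simpl in E;
  repeat match type of E with context [?a <=? ?b] => destruct (Nat.leb_spec a b) end;
  try discriminate E; injection E; intros; subst.

Lemma typ_mtyp_unshift :
  (forall G t s b e m f, typ G t s b e m f -> forall d c u, shift d c u = t ->
     exists G0, typ G0 u s b e m f /\ ctx_eq G (ctx_shift d c G0)) /\
  (forall G t A b e m f, mtyp G t A b e m f -> forall d c u, shift d c u = t ->
     exists G0, mtyp G0 u A b e m f /\ ctx_eq G (ctx_shift d c G0)).
Proof.
  apply typ_mtyp_mut.
  - intros x s d c u E; invert_shift E; (eexists; split; [apply ty_ax | ctx_solve]).
  - intros G p t s A b e m f ep mp fp Ht IH Hp d c u E; invert_shift E.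
    destruct (IH _ _ _ eq_refl) as (G0 & Ht0 & HG).
    exists (ctx_rem G0 (np p)); split; [| rewrite HG; ctx_solve].
    rewrite HG, ctx_restr_shift_above in Hp; apply ty_abs; assumption.
  - intros G p t s b e m f Ht IH Hs Htight d c u E; invert_shift E.
    destruct (IH _ _ _ eq_refl) as (G0 & Ht0 & HG).
    exists (ctx_rem G0 (np p)); split; [| rewrite HG; ctx_solve].
    apply ty_abs_p with (s := s); [exact Ht0 | exact Hs |].
    apply (tight_below_restr _ G); [rewrite HG; apply ctx_restr_shift_above | exact Htight].
  - intros G D t u A s bt et mt ft bu eu mu fu Ht IHt Hu IHu d c v E; invert_shift E.
    destruct (IHt _ _ _ eq_refl) as (G0 & Ht0 & HG), (IHu _ _ _ eq_refl) as (D0 & Hu0 & HD).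
    exists (ctx_and G0 D0); split; [econstructor; eauto | rewrite HG, HD; ctx_solve].
  - intros G t u b e m f Ht IHt d c v E; invert_shift E.
    destruct (IHt _ _ _ eq_refl) as (G0 & Ht0 & HG).
    exists G0; split; [apply ty_app_p | ]; assumption.
  - intros G D t u A B bt et mt ft bu eu mu fu Ht IHt Hu IHu d c v E; invert_shift E.
    destruct (IHt _ _ _ eq_refl) as (G0 & Ht0 & HG), (IHu _ _ _ eq_refl) as (D0 & Hu0 & HD).
    exists (ctx_and G0 D0); split; [econstructor; eauto | rewrite HG, HD; ctx_solve].
  - intros t u d c v E; invert_shift E.
    exists ctx_empty; split; [constructor | ctx_solve].
  - intros G D t p u s A bt et mt ft ep mp fp bu eu mu fu Ht IHt Hp Hu IHu d c v E; invert_shift E.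
    destruct (IHt _ _ _ eq_refl) as (G0 & Ht0 & HG), (IHu _ _ _ eq_refl) as (D0 & Hu0 & HD).
    exists (ctx_and (ctx_rem G0 (np p)) D0); split; [| rewrite HG, HD; ctx_solve].
    rewrite HG, ctx_restr_shift_above in Hp; econstructor; eauto.
  - intros G G' t s s' b e m f Ht IH HG' Hs d c u E.
    destruct (IH _ _ _ E) as (G0 & Ht0 & HG).
    exists G0; split; [rewrite <- Hs | rewrite <- HG']; assumption.
  - intros t d c u _; exists ctx_empty; split; [constructor | ctx_solve].
  - intros G D t s A b1 e1 m1 f1 b2 e2 m2 f2 Ht IHt HA IHA d c u E.
    destruct (IHt _ _ _ E) as (G0 & Ht0 & HG), (IHA _ _ _ E) as (D0 & HA0 & HD).
    exists (ctx_and G0 D0); split; [econstructor; eauto | rewrite HG, HD; ctx_solve].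
  - intros G G' t A A' b e m f Ht IH HG' HA' d c u E.
    destruct (IH _ _ _ E) as (G0 & HA0 & HG).
    exists G0; split; [rewrite <- HA' | rewrite <- HG']; assumption.
Qed.

Lemma typ_unshift (G : ctx) (d c : nat) (u : term) (s : ty) (b e m f : nat) :
  typ G (shift d c u) s b e m f ->
  exists G0, typ G0 u s b e m f /\ ctx_eq G (ctx_shift d c G0).
Proof. intros H; exact (proj1 typ_mtyp_unshift _ _ _ _ _ _ _ H _ _ _ eq_refl). Qed.

Lemma mtyp_unshift (G : ctx) (d c : nat) (u : term) (A : mty) (b e m f : nat) :
  mtyp G (shift d c u) A b e m f ->
  exists G0, mtyp G0 u A b e m f /\ ctx_eq G (ctx_shift d c G0).
Proof. intros H; exact (proj2 typ_mtyp_unshift _ _ _ _ _ _ _ H _ _ _ eq_refl). Qed.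

(** * Anti-substitution *)

Definition typ_unsubst (k : nat) (u : term) (G : ctx) (t : term) (s : ty) (b e m f : nat) :
  Prop :=
  exists G1 D b1 e1 m1 f1 b2 e2 m2 f2,
    typ G1 t s b1 e1 m1 f1 /\ mtyp D u (G1 k) b2 e2 m2 f2 /\
    ctx_eq G (ctx_and (ctx_del k G1) (ctx_shift k 0 D)) /\
    b = b1 + b2 /\ e = e1 + e2 /\ m = m1 + m2 /\ f = f1 + f2.

Definition mtyp_unsubst (k : nat) (u : term) (G : ctx) (t : term) (A : mty) (b e m f : nat) :
  Prop :=
  exists G1 D b1 e1 m1 f1 b2 e2 m2 f2,
    mtyp G1 t A b1 e1 m1 f1 /\ mtyp D u (G1 k) b2 e2 m2 f2 /\
    ctx_eq G (ctx_and (ctx_del k G1) (ctx_shift k 0 D)) /\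
    b = b1 + b2 /\ e = e1 + e2 /\ m = m1 + m2 /\ f = f1 + f2.

Lemma typ_unsubst_var (k : nat) (u : term) (G : ctx) (s : ty) (b e m f : nat) :
  typ G (shift k 0 u) s b e m f -> typ_unsubst k u G (Var k) s b e m f.
Proof.
  intros H; destruct (typ_unshift _ _ _ _ _ _ _ _ _ H) as (G0 & Hu & HG).
  exists (ctx_one k [s]), G0, 0, 0, 0, 0, b, e, m, f; repeat split.
  - apply ty_ax.
  - unfold ctx_one; rewrite Nat.eqb_refl; apply mtyp_singleton, Hu.
  - rewrite HG; ctx_solve.
Qed.

Lemma ctx_restr_unsubst (k n : nat) (G D : ctx) :
  ctx_eq (ctx_restr (ctx_and (ctx_del (k + n) G) (ctx_shift (k + n) 0 D)) n)
         (ctx_restr G n).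
Proof. ctx_solve. Qed.

Lemma ctx_rem_unsubst (k n : nat) (G D : ctx) :
  ctx_eq (ctx_rem (ctx_and (ctx_del (k + n) G) (ctx_shift (k + n) 0 D)) n)
         (ctx_and (ctx_del k (ctx_rem G n)) (ctx_shift k 0 D)).
Proof. ctx_solve. Qed.

Lemma ctx_and_unsubst (k : nat) (G1 G2 D1 D2 : ctx) :
  ctx_eq (ctx_and (ctx_and (ctx_del k G1) (ctx_shift k 0 D1))
                  (ctx_and (ctx_del k G2) (ctx_shift k 0 D2)))
         (ctx_and (ctx_del k (ctx_and G1 G2)) (ctx_shift k 0 (ctx_and D1 D2))).
Proof. ctx_solve. Qed.

Ltac invert_subst E Hd :=
  lazymatch type of E with
  | subst ?k _ ?t0 = _ =>
      let n := fresh "n" in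
      destruct t0 as [n | | | |]; simpl in E;
      [ destruct (Nat.eq_dec n k) as [-> | Hnk];
        [ rewrite Nat.ltb_irrefl, Nat.eqb_refl in E; rewrite <- E in Hd; apply typ_unsubst_var, Hd
        | rewrite (proj2 (Nat.eqb_neq n k) Hnk) in E; destruct (Nat.ltb_spec n k) ]
      | .. ];
      try discriminate E; injection E; intros; subst
  end.

(* The derivation is taken twice: when [t0] is the substituted variable,
   [subst k u t0] may have any shape and the whole derivation is needed. *)
Lemma typ_mtyp_unsubst :
  (forall G t s b e m f, typ G t s b e m f -> typ G t s b e m f ->
     forall k u t0, subst k u t0 = t -> typ_unsubst k u G t0 s b e m f) /\
  (forall G t A b e m f, mtyp G t A b e m f -> mtyp G t A b e m f ->
     forall k u t0, subst k u t0 = t -> mtyp_unsubst k u G t0 A b e m f).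
Proof.
  apply typ_mtyp_mut.
  - intros x s Hd k u t0 E; invert_subst E Hd;
      do 10 eexists; (split; [apply ty_ax |]);
      (split; [unfold ctx_one; rewrite (proj2 (Nat.eqb_neq _ _)) by lia; constructor |]);
      (split; [ctx_solve | lia]).
  - intros G p t s A b e m f ep mp fp Ht IH Hp Hd k u t0 E; invert_subst E Hd.
    destruct (IH Ht _ _ _ eq_refl)
      as (G1 & D & ? & ? & ? & ? & ? & ? & ? & ? & Ht1 & Hu & HG & -> & -> & -> & ->).
    exists (ctx_rem G1 (np p)), D; do 8 eexists; split.
    { apply ty_abs; [exact Ht1 |]. rewrite HG, ctx_restr_unsubst in Hp; exact Hp. }
    split; [exact Hu |]; split; [rewrite HG; apply ctx_rem_unsubst | lia].
  - intros G p t s b e m f Ht IH Hs Htight Hd k u t0 E; invert_subst E Hd.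
    destruct (IH Ht _ _ _ eq_refl)
      as (G1 & D & ? & ? & ? & ? & ? & ? & ? & ? & Ht1 & Hu & HG & -> & -> & -> & ->).
    exists (ctx_rem G1 (np p)), D; do 8 eexists; split.
    { apply ty_abs_p with (s := s); [exact Ht1 | exact Hs |].
      apply (tight_below_restr _ G); [rewrite HG; apply ctx_restr_unsubst | exact Htight]. }
    split; [exact Hu |]; split; [rewrite HG; apply ctx_rem_unsubst | lia].
  - intros G D t v A s bt et mt ft bu eu mu fu Ht IHt Hv IHv Hd k u t0 E; invert_subst E Hd.
    destruct (IHt Ht _ _ _ eq_refl)
      as (G1 & D1 & ? & ? & ? & ? & ? & ? & ? & ? & Ht1 & Hu1 & HG1 & -> & -> & -> & ->),
      (IHv Hv _ _ _ eq_refl)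
      as (G2 & D2 & ? & ? & ? & ? & ? & ? & ? & ? & Hv2 & Hu2 & HG2 & -> & -> & -> & ->).
    exists (ctx_and G1 G2), (ctx_and D1 D2); do 8 eexists.
    split; [eapply ty_app; eauto |]; split; [apply mtyp_app; eauto |].
    split; [rewrite HG1, HG2; apply ctx_and_unsubst | lia].
  - intros G t v b e m f Ht IH Hd k u t0 E; invert_subst E Hd.
    destruct (IH Ht _ _ _ eq_refl)
      as (G1 & D & ? & ? & ? & ? & ? & ? & ? & ? & Ht1 & Hu & HG & -> & -> & -> & ->).
    exists G1, D; do 8 eexists.
    split; [apply ty_app_p; eauto |]; split; [exact Hu |]; split; [exact HG | lia].
  - intros G D t v A B bt et mt ft bu eu mu fu Ht IHt Hv IHv Hd k u t0 E; invert_subst E Hd.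
    destruct (IHt Ht _ _ _ eq_refl)
      as (G1 & D1 & ? & ? & ? & ? & ? & ? & ? & ? & Ht1 & Hu1 & HG1 & -> & -> & -> & ->),
      (IHv Hv _ _ _ eq_refl)
      as (G2 & D2 & ? & ? & ? & ? & ? & ? & ? & ? & Hv2 & Hu2 & HG2 & -> & -> & -> & ->).
    exists (ctx_and G1 G2), (ctx_and D1 D2); do 8 eexists.
    split; [eapply ty_pair; eauto |]; split; [apply mtyp_app; eauto |].
    split; [rewrite HG1, HG2; apply ctx_and_unsubst | lia].
  - intros t v Hd k u t0 E; invert_subst E Hd.
    exists ctx_empty, ctx_empty, 0, 0, 0, 1, 0, 0, 0, 0.
    split; [apply ty_pair_p |]; split; [constructor |]; split; [ctx_solve | lia].
  - intros G D t p v s A bt et mt ft ep mp fp bu eu mu fu Ht IHt Hp Hv IHv Hd k u t0 E;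
      invert_subst E Hd.
    destruct (IHt Ht _ _ _ eq_refl)
      as (G1 & D1 & ? & ? & ? & ? & ? & ? & ? & ? & Ht1 & Hu1 & HG1 & -> & -> & -> & ->),
      (IHv Hv _ _ _ eq_refl)
      as (G2 & D2 & ? & ? & ? & ? & ? & ? & ? & ? & Hv2 & Hu2 & HG2 & -> & -> & -> & ->).
    exists (ctx_and (ctx_rem G1 (np p)) G2), (ctx_and D1 D2); do 8 eexists.
    split; [rewrite HG1, ctx_restr_unsubst in Hp; eapply ty_match; eauto |].
    split; [apply mtyp_app; eauto |].
    split; [rewrite HG1, HG2, ctx_rem_unsubst; apply ctx_and_unsubst | lia].
  - intros G G' t s s' b e m f Ht IH HG' Hs _ k u t0 E.
    destruct (IH Ht _ _ _ E) as (G1 & D & b1 & e1 & m1 & f1 & b2 & e2 & m2 & f2 & Ht1 & HG & H).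
    exists G1, D, b1, e1, m1, f1, b2, e2, m2, f2.
    split; [rewrite <- Hs; exact Ht1 |]; split; [exact HG | rewrite <- HG'; exact H].
  - intros t _ k u t0 _.
    exists ctx_empty, ctx_empty, 0, 0, 0, 0, 0, 0, 0, 0.
    split; [constructor |]; split; [constructor |]; split; [ctx_solve | lia].
  - intros G D t s A b1' e1' m1' f1' b2' e2' m2' f2' Ht IHt HA IHA _ k u t0 E.
    destruct (IHt Ht _ _ _ E)
      as (G1 & D1 & ? & ? & ? & ? & ? & ? & ? & ? & Ht1 & Hu1 & HG1 & -> & -> & -> & ->),
      (IHA HA _ _ _ E)
      as (G2 & D2 & ? & ? & ? & ? & ? & ? & ? & ? & HA2 & Hu2 & HG2 & -> & -> & -> & ->).
    exists (ctx_and G1 G2), (ctx_and D1 D2); do 8 eexists.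
    split; [eapply many_cons; eauto |]; split; [apply mtyp_app; eauto |].
    split; [rewrite HG1, HG2; apply ctx_and_unsubst | lia].
  - intros G G' t A A' b e m f HA IH HG' HA' _ k u t0 E.
    destruct (IH HA _ _ _ E) as (G1 & D & b1 & e1 & m1 & f1 & b2 & e2 & m2 & f2 & HA1 & HG & H).
    exists G1, D, b1, e1, m1, f1, b2, e2, m2, f2.
    split; [rewrite <- HA'; exact HA1 |]; split; [exact HG | rewrite <- HG'; exact H].
Qed.

Lemma typ_unsubst0 (G : ctx) (t u : term) (s : ty) (b e m f : nat) :
  typ G (subst0 t u) s b e m f -> typ_unsubst 0 u G t s b e m f.
Proof. intros H; exact (proj1 typ_mtyp_unsubst _ _ _ _ _ _ _ H H _ _ _ eq_refl). Qed.

(** * List contexts *)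

Lemma typ_Sub_inv (G : ctx) (t : term) (p : pat) (u : term) (s : ty) (b e m f : nat) :
  typ G (Sub t p u) s b e m f ->
  exists Gt D A bt et mt ft ep mp fp bu eu mu fu,
    typ Gt t s bt et mt ft /\ ptyp (ctx_restr Gt (np p)) p A ep mp fp /\
    mtyp D u A bu eu mu fu /\ ctx_eq G (ctx_and (ctx_rem Gt (np p)) D) /\
    b = bt + bu /\ e = et + eu + ep /\ m = mt + mu + mp /\ f = ft + fu + fp.
Proof.
  intros H; remember (Sub t p u) as T eqn:ET; revert t p u ET.
  induction H; intros t0 p0 u0 ET; try discriminate ET.
  - injection ET as -> -> ->; do 14 eexists; repeat split; eauto; reflexivity.
  - destruct (IHtyp _ _ _ ET)
      as (Gt & D & A & bt & et & mt & ft & ep & mp & fp & bu & eu & mu & fu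
          & Ht & Hp & Hu & HG & Hc).
    exists Gt, D, A, bt, et, mt, ft, ep, mp, fp, bu, eu, mu, fu.
    split; [rewrite <- H1; exact Ht |]; split; [exact Hp |]; split; [exact Hu |].
    split; [rewrite <- H0; exact HG | exact Hc].
Qed.

(* [ltyp L Gi G b e m f]: the substitutions of [L] are typed so that a hole typed
   in [Gi] yields [plug L _] typed in [G], with [b e m f] added to the counters. *)
Inductive ltyp : lctx -> ctx -> ctx -> nat -> nat -> nat -> nat -> Prop :=
| ltyp_nil G G' : ctx_eq G G' -> ltyp [] G G' 0 0 0 0
| ltyp_cons q w L Gi Gm G D B b e m f ep mp fp bw ew mw fw :
    ltyp L Gi Gm b e m f -> ptyp (ctx_restr Gm (np q)) q B ep mp fp ->
    mtyp D w B bw ew mw fw -> ctx_eq G (ctx_and (ctx_rem Gm (np q)) D) ->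
    ltyp ((q, w) :: L) Gi G (b + bw) (e + ew + ep) (m + mw + mp) (f + fw + fp).

Lemma typ_plug_inv (L : lctx) (G : ctx) (t : term) (s : ty) (b e m f : nat) :
  typ G (plug L t) s b e m f ->
  exists Gt bt et mt ft bl el ml fl,
    typ Gt t s bt et mt ft /\ ltyp L Gt G bl el ml fl /\
    b = bt + bl /\ e = et + el /\ m = mt + ml /\ f = ft + fl.
Proof.
  revert G b e m f; induction L as [| [q w] L IH]; intros G b e m f H; simpl in H.
  - exists G, b, e, m, f, 0, 0, 0, 0; repeat split; try lia; auto; constructor; reflexivity.
  - apply typ_Sub_inv in H
      as (Gm & D & B & bm & em & mm & fm & ep & mp & fp & bw & ew & mw & fw
          & Hm & Hq & Hw & HG & -> & -> & -> & ->).
    destruct (IH _ _ _ _ _ Hm)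
      as (Gt & bt & et & mt & ft & bl & el & ml & fl & Ht & HL & -> & -> & -> & ->).
    exists Gt, bt, et, mt, ft, (bl + bw), (el + ew + ep), (ml + mw + mp), (fl + fw + fp).
    repeat split; try lia; auto; econstructor; eauto.
Qed.

Lemma typ_plug (L : lctx) (Gt G : ctx) (bl el ml fl : nat) :
  ltyp L Gt G bl el ml fl ->
  forall t s bt et mt ft, typ Gt t s bt et mt ft ->
  typ G (plug L t) s (bt + bl) (et + el) (mt + ml) (ft + fl).
Proof.
  induction 1; intros t s bt et mt ft Ht; simpl.
  - rewrite <- H, !Nat.add_0_r; exact Ht.
  - rewrite H2, !Nat.add_assoc; econstructor; eauto.
Qed.

(* The de Bruijn form of bv(L) # fv(u): the part of the hole context that comes
   from a term shifted past [L] goes through [L] unchanged. *)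
Lemma ltyp_split (L : lctx) (Gt G : ctx) (bl el ml fl : nat) :
  ltyp L Gt G bl el ml fl ->
  forall H Gy, ctx_eq Gt (ctx_and (ctx_shift (nbv L) 0 H) Gy) ->
  exists G', ltyp L Gy G' bl el ml fl /\ ctx_eq G (ctx_and H G').
Proof.
  induction 1 as [G G' HG | q w L Gi Gm G D B b e m f ep mp fp bw ew mw fw HL IH Hq Hw HG];
    intros Hc Gy E; simpl in E.
  - exists Gy; split; [constructor; reflexivity | rewrite <- HG, E; ctx_solve].
  - destruct (IH (ctx_shift (np q) 0 Hc) Gy) as (Gm' & HL' & HGm); [rewrite E; ctx_solve |].
    exists (ctx_and (ctx_rem Gm' (np q)) D); split; [| rewrite HG, HGm; ctx_solve].
    econstructor; eauto; [| reflexivity].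
    assert (Er : ctx_eq (ctx_restr (ctx_and (ctx_shift (np q) 0 Hc) Gm') (np q))
                        (ctx_restr Gm' (np q))) by ctx_solve.
    rewrite HGm, Er in Hq; exact Hq.
Qed.

(** * Subject expansion *)

Ltac exact_up_to_counters H :=
  lazymatch type of H with
  | typ _ _ _ ?b ?e ?m ?f =>
      lazymatch goal with
      | |- typ _ _ _ ?b' ?e' ?m' ?f' =>
          replace b' with b by lia; replace e' with e by lia;
          replace m' with m by lia; replace f' with f by lia; exact H
      end
  end.

Lemma typ_expand_beta (L : lctx) (p : pat) (r u : term) (G : ctx) (s : ty) (b e m f : nat) :
  typ G (plug L (Sub r p (shift (nbv L) 0 u))) s b e m f ->
  typ G (App (plug L (Lam p r)) u) s (b + 1) e m f.
Proof.
  intros H.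
  apply typ_plug_inv in H
    as (Gx & bx & ex & mx & fx & bl & el & ml & fl & Hx & HL & -> & -> & -> & ->).
  apply typ_Sub_inv in Hx
    as (Gr & Du & A & br & er & mr & fr & ep & mp & fp & bu & eu & mu & fu
        & Hr & Hp & Hu & HGx & -> & -> & -> & ->).
  apply mtyp_unshift in Hu as (D & Hu & HD).
  destruct (ltyp_split _ _ _ _ _ _ _ HL D (ctx_rem Gr (np p))) as (G' & HL' & HG);
    [rewrite HGx, HD; ctx_solve |].
  assert (Hlam := typ_plug _ _ _ _ _ _ _ HL' _ _ _ _ _ _ (ty_abs _ _ _ _ _ _ _ _ _ _ _ _ Hr Hp)).
  assert (E : ctx_eq G (ctx_and G' D)) by (rewrite HG; ctx_solve).
  rewrite E; exact_up_to_counters (ty_app _ _ _ _ _ _ _ _ _ _ _ _ _ _ Hlam Hu).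
Qed.

Lemma typ_expand_subst (t u : term) (G : ctx) (s : ty) (b e m f : nat) :
  typ G (subst0 t u) s b e m f -> typ G (Sub t PVar u) s b (e + 1) m f.
Proof.
  intros H.
  apply typ_unsubst0 in H
    as (Gt & D & bt & et & mt & ft & bu & eu & mu & fu & Ht & Hu & HG & -> & -> & -> & ->).
  assert (Hx : ptyp (ctx_restr Gt (np PVar)) PVar (Gt 0) 1 0 0).
  { eapply pat_eq; [apply pat_v | | reflexivity].
    intros [| i]; reflexivity. }
  assert (E : ctx_eq G (ctx_and (ctx_rem Gt (np PVar)) D)) by (rewrite HG; simpl; ctx_solve).
  rewrite E; exact_up_to_counters (ty_match _ _ _ _ _ _ _ _ _ _ _ _ _ _ _ _ _ _ Ht Hx Hu).
Qed.

Lemma typ_expand_match (L : lctx) (p1 p2 : pat) (t u1 u2 : term) (G : ctx) (s : ty)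
    (b e m f : nat) :
  typ G (plug L (Sub (Sub (shift (nbv L) (np p1 + np p2) t) p1 (shift (np p2) 0 u1)) p2 u2))
      s b e m f ->
  typ G (Sub t (PPair p1 p2) (plug L (Pair u1 u2))) s b e (m + 1) f.
Proof.
  intros H.
  apply typ_plug_inv in H
    as (Gx & bx & ex & mx & fx & bl & el & ml & fl & Hx & HL & -> & -> & -> & ->).
  apply typ_Sub_inv in Hx
    as (Gx1 & D2 & A2 & bx1 & ex1 & mx1 & fx1 & ep2 & mp2 & fp2 & b2 & e2 & m2 & f2
        & Hx1 & Hp2 & Hu2 & HGx & -> & -> & -> & ->).
  apply typ_Sub_inv in Hx1
    as (Gts & D1s & A1 & bt & et & mt & ft & ep1 & mp1 & fp1 & b1 & e1 & m1 & f1
        & Hts & Hp1 & Hu1s & HGx1 & -> & -> & -> & ->).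
  apply typ_unshift in Hts as (Gt & Ht & HGt).
  apply mtyp_unshift in Hu1s as (D1 & Hu1 & HD1).
  destruct (ltyp_split _ _ _ _ _ _ _ HL (ctx_rem Gt (np p1 + np p2)) (ctx_and D1 D2))
    as (G' & HL' & HG); [rewrite HGx, HGx1, HGt, HD1; ctx_solve |].
  assert (Hpair := typ_plug _ _ _ _ _ _ _ HL' _ _ _ _ _ _
                     (ty_pair _ _ _ _ _ _ _ _ _ _ _ _ _ _ Hu1 Hu2)).
  assert (Hp := pat_x _ _ _ _ _ _ _ _ _ _ _ _ Hp1 Hp2).
  assert (Er : ctx_eq (ctx_pjoin (np p1) (ctx_restr Gts (np p1)) (ctx_restr Gx1 (np p2)))
                      (ctx_restr Gt (np (PPair p1 p2))))
    by (rewrite HGx1, HGt, HD1; simpl; ctx_solve).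
  rewrite Er in Hp.
  rewrite HG; exact_up_to_counters
    (ty_match _ _ _ _ _ _ _ _ _ _ _ _ _ _ _ _ _ _ Ht Hp (mtyp_singleton _ _ _ _ _ _ _ Hpair)).
Qed.

Definition incr_by (k : kind) (n b' e' m' b e m : nat) : Prop :=
  match k with
  | KB => b = b' + n /\ e' = e /\ m' = m
  | KE => b' = b /\ e = e' + n /\ m' = m
  | KM => b' = b /\ e' = e /\ m = m' + n
  end.

Definition root_step (t : term) (k : kind) (t' : term) : Prop :=
  (k = KB /\ exists L p r u,
     t = App (plug L (Lam p r)) u /\ t' = plug L (Sub r p (shift (nbv L) 0 u))) \/
  (k = KE /\ exists t0 u, t = Sub t0 PVar u /\ t' = subst0 t0 u) \/
  (k = KM /\ exists L p1 p2 t0 u1 u2,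
     t = Sub t0 (PPair p1 p2) (plug L (Pair u1 u2)) /\
     t' = plug L (Sub (Sub (shift (nbv L) (np p1 + np p2) t0) p1 (shift (np p2) 0 u1)) p2 u2)).

Lemma hred_cases (t : term) (k : kind) (t' : term) :
  hred t k t' ->
  root_step t k t' \/
  (exists p a a', t = Lam p a /\ t' = Lam p a' /\ hred a k a') \/
  (exists a a' u, t = App a u /\ t' = App a' u /\ hred a k a') \/
  (exists a a' p u, t = Sub a p u /\ t' = Sub a' p u /\ hred a k a') \/
  (exists a p u u', t = Sub a p u /\ t' = Sub a p u' /\ p <> PVar /\ hred u k u').
Proof.
  unfold root_step; destruct t as [n | p a | a c | a c | a p c]; simpl; intros H.
  - destruct H.
  - destruct H as (a' & -> & Ha); right; left; exists p, a, a'; auto.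
  - destruct H.
  - destruct H as [(-> & L & p & r & -> & ->) | (a' & -> & Ha & _)].
    + left; left; split; [reflexivity | exists L, p, r, c; auto].
    + right; right; left; exists a, a', c; auto.
  - destruct H as [(-> & _ & p1 & p2 & L & u1 & u2 & -> & -> & ->)
                  | [(-> & _ & -> & ->) | [(a' & -> & Ha) | (_ & Hp & c' & -> & Hc)]]].
    + left; right; right; split; [reflexivity | exists L, p1, p2, a, u1, u2; auto].
    + left; right; left; split; [reflexivity | exists a, c; auto].
    + right; right; right; left; exists a, a', p, c; auto.
    + right; right; right; right; exists a, p, c, c'; auto.
Qed.

Lemma typ_expand_root (G : ctx) (t t' : term) (s : ty) (k : kind) (b' e' m' f' : nat) :
  typ G t' s b' e' m' f' -> root_step t k t' ->
  exists b e m f, typ G t s b e m f /\ incr_by k 1 b' e' m' b e m.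
Proof.
  intros H [(-> & L & p & r & u & -> & ->)
           | [(-> & t0 & u & -> & ->) | (-> & L & p1 & p2 & t0 & u1 & u2 & -> & ->)]].
  - exists (b' + 1), e', m', f'; split; [apply typ_expand_beta, H | simpl; lia].
  - exists b', (e' + 1), m', f'; split; [apply typ_expand_subst, H | simpl; lia].
  - exists b', e', (m' + 1), f'; split; [apply typ_expand_match, H | simpl; lia].
Qed.

Lemma ptyp_PPair_length (G : ctx) (p : pat) (A : mty) (e m f : nat) :
  ptyp G p A e m f -> p <> PVar -> length A = 1.
Proof.
  induction 1; intros Hp; simpl; auto.
  - congruence.
  - rewrite <- (mteq_length _ _ H1); auto.
Qed.

Ltac hred_cases_on Hr Hd :=
  destruct (hred_cases _ _ _ Hr)
    as [Hroot | [(? & a & a' & -> & E & Ha) | [(a & a' & ? & -> & E & Ha)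
       | [(a & a' & ? & ? & -> & E & Ha) | (? & ? & v & v' & -> & E & Hnv & Hv)]]]];
  [exact (typ_expand_root _ _ _ _ _ _ _ _ _ Hd Hroot) | ..]; try discriminate E;
  injection E; intros; subst.

(* As in [typ_mtyp_unsubst], the derivation is taken twice, for root steps. *)
Lemma typ_mtyp_expand :
  (forall G t' s b' e' m' f', typ G t' s b' e' m' f' -> typ G t' s b' e' m' f' ->
     forall t k, hred t k t' ->
     exists b e m f, typ G t s b e m f /\ incr_by k 1 b' e' m' b e m) /\
  (forall G t' A b' e' m' f', mtyp G t' A b' e' m' f' -> mtyp G t' A b' e' m' f' ->
     forall t k, hred t k t' ->
     exists b e m f, mtyp G t A b e m f /\ incr_by k (length A) b' e' m' b e m).
Proof.
  apply typ_mtyp_mut.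
  - intros x s Hd t k Hr; hred_cases_on Hr Hd.
  - intros G p t s A b e m f ep mp fp Ht IH Hp Hd t0 k Hr; hred_cases_on Hr Hd.
    destruct (IH Ht _ _ Ha) as (b0 & e0 & m0 & f0 & Ht0 & Hc).
    exists (b0 + 1), (e0 + ep), (m0 + mp), (f0 + fp).
    split; [apply ty_abs; assumption | destruct k; simpl in *; lia].
  - intros G p t s b e m f Ht IH Hs Htight Hd t0 k Hr; hred_cases_on Hr Hd.
    destruct (IH Ht _ _ Ha) as (b0 & e0 & m0 & f0 & Ht0 & Hc).
    exists b0, e0, m0, (f0 + 1).
    split; [apply ty_abs_p with (s := s); assumption | destruct k; simpl in *; lia].
  - intros G D t u A s bt et mt ft bu eu mu fu Ht IH Hu _ Hd t0 k Hr; hred_cases_on Hr Hd.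
    destruct (IH Ht _ _ Ha) as (b0 & e0 & m0 & f0 & Ht0 & Hc).
    exists (b0 + bu), (e0 + eu), (m0 + mu), (f0 + fu).
    split; [eapply ty_app; eassumption | destruct k; simpl in *; lia].
  - intros G t u b e m f Ht IH Hd t0 k Hr; hred_cases_on Hr Hd.
    destruct (IH Ht _ _ Ha) as (b0 & e0 & m0 & f0 & Ht0 & Hc).
    exists b0, e0, m0, (f0 + 1).
    split; [apply ty_app_p; assumption | destruct k; simpl in *; lia].
  - intros G D t u A B bt et mt ft bu eu mu fu _ _ _ _ Hd t0 k Hr; hred_cases_on Hr Hd.
  - intros t u Hd t0 k Hr; hred_cases_on Hr Hd.
  - intros G D t p u s A bt et mt ft ep mp fp bu eu mu fu Ht IHt Hp Hu IHu Hd t0 k Hr;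
      hred_cases_on Hr Hd.
    + destruct (IHt Ht _ _ Ha) as (b0 & e0 & m0 & f0 & Ht0 & Hc).
      exists (b0 + bu), (e0 + eu + ep), (m0 + mu + mp), (f0 + fu + fp).
      split; [eapply ty_match; eassumption | destruct k; simpl in *; lia].
    + destruct (IHu Hu _ _ Hv) as (b0 & e0 & m0 & f0 & Hu0 & Hc).
      rewrite (ptyp_PPair_length _ _ _ _ _ _ Hp Hnv) in Hc.
      exists (bt + b0), (et + e0 + ep), (mt + m0 + mp), (ft + f0 + fp).
      split; [eapply ty_match; eassumption | destruct k; simpl in *; lia].
  - intros G G' t s s' b e m f Ht IH HG Hs _ t0 k Hr.
    destruct (IH Ht _ _ Hr) as (b0 & e0 & m0 & f0 & Ht0 & Hc).
    exists b0, e0, m0, f0; split; [rewrite <- HG, <- Hs; exact Ht0 | exact Hc].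
  - intros t _ t0 k _.
    exists 0, 0, 0, 0; split; [constructor | destruct k; simpl; lia].
  - intros G D t s A b1 e1 m1 f1 b2 e2 m2 f2 Ht IHt HA IHA _ t0 k Hr.
    destruct (IHt Ht _ _ Hr) as (b3 & e3 & m3 & f3 & Ht0 & Hc1),
      (IHA HA _ _ Hr) as (b4 & e4 & m4 & f4 & HA0 & Hc2).
    exists (b3 + b4), (e3 + e4), (m3 + m4), (f3 + f4).
    split; [econstructor; eassumption | destruct k; simpl in *; lia].
  - intros G G' t A A' b e m f HA IH HG HAA _ t0 k Hr.
    destruct (IH HA _ _ Hr) as (b0 & e0 & m0 & f0 & HA0 & Hc).
    rewrite (mteq_length _ _ HAA) in Hc.
    exists b0, e0, m0, f0; split; [rewrite <- HG, <- HAA; exact HA0 | exact Hc].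
Qed.

Theorem lemma9 (G : ctx) (t t' : term) (s : ty) (k : kind)
  (b' e' m' f' : nat) :
  typ G t' s b' e' m' f' ->
  hred t k t' ->
  exists b e m f : nat,
    typ G t s b e m f /\
    match k with
    | KB => b = b' + 1 /\ e' = e /\ m' = m
    | KE => b' = b /\ e = e' + 1 /\ m' = m
    | KM => b' = b /\ e' = e /\ m = m' + 1
    end.
Proof.
  intros Ht' Hred.
  exact (proj1 typ_mtyp_expand _ _ _ _ _ _ _ Ht' Ht' _ _ Hred).
Qed.
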